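(* In the event-driven HotStuff implementation (as defined in the context), let $b$ and $w$ be two conflicting nodes. Then $b$ and $w$ cannot both become committed, each by an honest replica.
   Context: There are $n = 3f+1$ replicas, at most $f$ of which are Byzantine; the others are honest. Messages are signed with unforgeable signatures. Replicas build a tree of nodes; each node $b$ has a parent $b.\mathit{parent}$, a height $b.\mathit{height}$ equal to its parent's height plus one, a command $b.\mathit{cmd}$, and a quorum certificate $b.\mathit{justify}$. A (valid) quorum certificate (QC) for a node $x$ consists of votes for $x$ signed by $2f+1$ distinct replicas; $\mathit{qc}.\mathit{node}$ denotes the node it refers to. A node $x$ extends $y$ if $y$ is $x$ or an ancestor of $x$; two nodes are conflicting if neither extends the other. Each honest replica keeps $\mathit{vheight}$ (height of the last node it voted for), a locked node $b_{\mathit{lock}}$, a last executed node $b_{\mathit{exec}}$, and a highest known QC $\mathit{qc}_{\mathit{high}}$. Voting: upon receiving a proposal $b_{\mathit{new}}$, the replica votes for $b_{\mathit{new}}$ only if $b_{\mathit{new}}.\mathit{height} > \mathit{vheight}$ and ($b_{\mathit{new}}$ extends $b_{\mathit{lock}}$ or $b_{\mathit{new}}.\mathit{justify}.\mathit{node}.\mathit{height} > b_{\mathit{lock}}.\mathit{height}$); when voting it sets $\mathit{vheight} \leftarrow b_{\mathit{new}}.\mathit{height}$. Update on receiving a node $b^{*}$: let $b'' = b^{*}.\mathit{justify}.\mathit{node}$, $b' = b''.\mathit{justify}.\mathit{node}$, $b = b'.\mathit{justify}.\mathit{node}$. The replica updates $\mathit{qc}_{\mathit{high}}$ with $b^{*}.\mathit{justify}$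 if it refers to a higher node; if $b'.\mathit{height} > b_{\mathit{lock}}.\mathit{height}$ it sets $b_{\mathit{lock}} \leftarrow b'$; and if $b''.\mathit{parent} = b'$ and $b'.\mathit{parent} = b$, it commits $b$ by calling $\mathrm{onCommit}(b)$ and sets $b_{\mathit{exec}} \leftarrow b$. Here $\mathrm{onCommit}(x)$: if $b_{\mathit{exec}}.\mathit{height} < x.\mathit{height}$, call $\mathrm{onCommit}(x.\mathit{parent})$ and then execute $x.\mathit{cmd}$. A node is committed by a replica when $\mathrm{onCommit}$ is invoked on it or on a descendant of it in this way (i.e., via a QC Three-Chain $b, b', b'', b^{*}$ with direct parent links $b \gets b' \gets b''$). *)

From mathcomp Require Import all_boot.
Set Implicit Arguments. Unset Strict Implicit. Unset Printing Implicit Defensive.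

Definition replica (f : nat) := 'I_(3 * f + 1).

Section HotStuff.
Variable f : nat.
Variable Node : eqType.

(* A quorum certificate: the node it refers to and the set of (distinct)
   replicas whose signed votes it contains. *)
Record QC := mkQC { qc_node : Node; qc_sigs : {set replica f} }.

(* The tree of nodes: every node has a parent (except the genesis node b0),
   a height and a justify QC.  (Commands are irrelevant for safety.) *)
Record tree := Tree {
  genesis : Node;
  parent  : Node -> option Node;
  height  : Node -> nat;
  justify : Node -> QC }.

Variable T : tree.

Inductive extends : Node -> Node -> Prop :=
| extends_refl x : extends x x
| extends_step x p y : parent T x = Some p -> extends p y -> extends x y.

Definition conflicting (x y : Node) : Prop := ~ extends x y /\ ~ extends y x.

Definition wf_tree : Prop :=
  [/\ parent T (genesis T) = None,
      (forall x, x <> genesis T -> exists p, parent T x = Some p),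
      (forall x p, parent T x = Some p -> height T x = (height T p).+1),
      qc_node (justify T (genesis T)) = genesis T
    & (forall x, x <> genesis T ->
         extends x (qc_node (justify T x)) /\ qc_node (justify T x) <> x)].

Record rstate := RState {
  vheight : nat;
  block   : Node;
  bexec   : Node;
  qchigh  : QC }.

Definition init_state : rstate :=
  RState (height T (genesis T)) (genesis T) (genesis T) (justify T (genesis T)).

Definition vote_rule (s : rstate) (bnew : Node) : Prop :=
  vheight s < height T bnew /\
  (extends bnew (block s) \/
   height T (block s) < height T (qc_node (justify T bnew))).

(* One step of an honest replica on receiving proposal bnew: first the voting
   decision [v], then update(bnew); [com] is Some b iff onCommit(b) is called. *)
Definition hs_step (s : rstate) (bnew : Node) (v : bool) (com : option Node)
    (s' : rstate) : Prop :=
  let b2 := qc_node (justify T bnew) in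
  let b1 := qc_node (justify T b2) in
  let b0 := qc_node (justify T b1) in
  [/\ (v <-> vote_rule s bnew),
      vheight s' = (if v then height T bnew else vheight s),
      qchigh s' = (if height T (qc_node (qchigh s)) < height T b2
                   then justify T bnew else qchigh s),
      block s' = (if height T (block s) < height T b1 then b1 else block s)
    & (if (parent T b2 == Some b1) && (parent T b1 == Some b0)
       then com = Some b0 /\ bexec s' = b0
       else com = None /\ bexec s' = bexec s)].

(* The local execution of a replica: the sequence of proposals it processes,
   the states before/after each step, whether it voted at each step, which
   node (if any) onCommit was called on, and the global time of each step. *)
Record run := Run {
  inputs  : seq Node;
  states  : nat -> rstate;
  votes   : nat -> bool;
  commits : nat -> option Node;
  times   : nat -> nat }.

Definition valid_run (R : run) : Prop :=
  [/\ states R 0 = init_state,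
      (forall i, i < size (inputs R) ->
         hs_step (states R i) (nth (genesis T) (inputs R) i) (votes R i)
                 (commits R i) (states R i.+1))
    & (forall i j, i < j -> j < size (inputs R) -> times R i < times R j)].

(* A node x is committed by a replica with run R if onCommit is invoked (via a
   three-chain) on x or on a descendant of x. *)
Definition committed_by (R : run) (x : Node) : Prop :=
  exists i b, [/\ i < size (inputs R), commits R i = Some b & extends b x].

(* A global execution: Hs is the set of honest replicas (at most f Byzantine),
   E r is the local execution of replica r (meaningful for honest r), ctime x is
   the global time at which node x is created.
   - honest replicas follow the protocol;
   - a replica can only process a node after it was created;
   - every QC carried by a node is valid: either the genesis QC, or it has
     2f+1 distinct signers, and (unforgeable signatures) every honest signer
     did vote for the referred node, before the carrying node was created. *)
Definition valid_execution (Hs : {set replica f}) (ctime : Node -> nat)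
    (E : replica f -> run) : Prop :=
  [/\ #|~: Hs| <= f,
      (forall r, r \in Hs -> valid_run (E r)),
      (forall r i, r \in Hs -> i < size (inputs (E r)) ->
         ctime (nth (genesis T) (inputs (E r)) i) <= times (E r) i)
    & (forall x, x <> genesis T ->
         qc_node (justify T x) = genesis T \/
         (2 * f + 1 <= #|qc_sigs (justify T x)| /\
          forall r, r \in Hs -> r \in qc_sigs (justify T x) ->
            exists i, [/\ i < size (inputs (E r)), votes (E r) i,
                          nth (genesis T) (inputs (E r)) i = qc_node (justify T x)
                        & times (E r) i < ctime x]))].

End HotStuff.

From mathcomp Require Import all_boot zify.
Set Implicit Arguments. Unset Strict Implicit. Unset Printing Implicit Defensive.

(* Two quorums of 2f+1 among 3f+1 replicas share an honest replica, and an honest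
   replica votes at strictly increasing heights, so two certified nodes (nodes referred
   to by a QC) of equal height coincide.  An honest replica commits b only through a
   direct chain b <- b' <- b'' with b'' certified; every honest voter for b'' is then
   locked at least as high as b, and by the voting rule each of its later votes goes to
   a node extending a certified node at least as high as b.  By induction on height,
   every certified node at least as high as b extends b.  The node through which w is
   committed is certified too, so the higher of the two committed nodes extends the
   lower one. *)

Lemma honest_in_quorums f (Hs A B : {set replica f}) :
  #|~: Hs| <= f -> 2 * f + 1 <= #|A| -> 2 * f + 1 <= #|B| ->
  exists r, [/\ r \in Hs, r \in A & r \in B].
Proof.
move=> byz_le qA qB.
have AB_le : #|A :|: B| <= 3 * f + 1 by rewrite -[X in _ <= X]card_ord max_card.
have dis_le : #|A :&: B :\: Hs| <= #|~: Hs|.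
  by apply/subset_leq_card/subsetP => r; rewrite !inE => /andP[].
have : 0 < #|A :&: B :&: Hs| by have := cardsUI A B; have := cardsID Hs (A :&: B); lia.
by case/card_gt0P => r; rewrite !inE => /andP[/andP[rA rB] rH]; exists r.
Qed.

Section Tree.
Variables (f : nat) (Node : eqType) (T : tree f Node).
Hypothesis wfT : wf_tree T.

Local Notation G := (genesis T).
Local Notation h := (height T).
Local Notation qc x := (qc_node (justify T x)).

Lemma height_parent x p : parent T x = Some p -> h x = (h p).+1.
Proof. by case: wfT => _ _ + _ _; apply. Qed.

Lemma parent_neq_genesis x p : parent T x = Some p -> x <> G.
Proof. by case: wfT => parentG _ _ _ _ xp xG; rewrite xG parentG in xp. Qed.

Lemma extends_inv x y : extends T x y ->
  x = y \/ exists2 p, parent T x = Some p & extends T p y.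
Proof. by case=> [|{}x p {}y xp py]; [left | right; exists p]. Qed.

Lemma extends_height x y : extends T x y -> x = y \/ h y < h x.
Proof.
elim=> [|{}x p {}y /height_parent-> _ [<-|lt_yp]]; [by left | right..]; lia.
Qed.

Lemma extends_trans x y z : extends T x y -> extends T y z -> extends T x z.
Proof. by elim=> // {}x p {}y xp _ IH /IH; apply: extends_step xp. Qed.

Lemma extends_comparable x y z : extends T x y -> extends T x z ->
  extends T y z \/ extends T z y.
Proof.
elim=> [|{}x p {}y xp py IH] xz; first by left.
case: (extends_inv xz) => [<-|[p' xp' p'z]]; first by right; apply: extends_step xp py.
by apply: IH; move: xp'; rewrite xp => -[->].
Qed.

Lemma extends_genesis x : extends T x G.
Proof.
have [n] := ubnP (h x); elim: n x => // n IH x /ltnSE hx.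
have [->|/eqP xG] := eqVneq x G; first exact: extends_refl.
have [p xp] : exists p, parent T x = Some p by case: wfT => _ + _ _ _; apply.
have lt_pn : h p < n by rewrite -(height_parent xp).
exact: extends_step xp (IH p lt_pn).
Qed.

Lemma height_genesis_le x : h G <= h x.
Proof. by case: (extends_height (extends_genesis x)) => [->|/ltnW]. Qed.

Lemma height_genesis_lt x : x <> G -> h G < h x.
Proof. by case: (extends_height (extends_genesis x)). Qed.

Lemma extends_justify x : extends T x (qc x).
Proof.
have [->|/eqP xG] := eqVneq x G; first by case: wfT => _ _ _ -> _; apply: extends_refl.
by case: wfT => _ _ _ _ /(_ x xG) [].
Qed.

Lemma height_justify_lt x : x <> G -> h (qc x) < h x.
Proof.
move=> xG; case: wfT => _ _ _ _ /(_ x xG) [/extends_height [eq_x|//]].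
by move/(_ (esym eq_x)).
Qed.

Lemma height_justify_le x : h (qc x) <= h x.
Proof.
have [->|/eqP /height_justify_lt/ltnW //] := eqVneq x G.
by case: wfT => _ _ _ ->.
Qed.

Definition certified n := n = G \/ exists2 x, x <> G & qc x = n.

Lemma certified_justify x : certified (qc x).
Proof.
have [->|/eqP xG] := eqVneq x G; first by left; case: wfT.
by right; exists x.
Qed.

(* [b2] is the b'' of a three-chain b <- b' <- b'' <- b*; the committed node b is
   [qc (qc b2)]. *)
Definition direct_chain b2 :=
  parent T b2 = Some (qc b2) /\ parent T (qc b2) = Some (qc (qc b2)).

Definition votes_for (R : run f Node) i n :=
  [/\ i < size (inputs R), votes R i & nth G (inputs R) i = n].

Section Run.
Context {R : run f Node}.
Hypothesis validR : valid_run T R.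

Local Notation st k := (states R k).
Local Notation inp i := (nth G (inputs R) i).
Local Notation lock k := (block (states R k)).

Lemma step_valid i : i < size (inputs R) ->
  hs_step T (st i) (inp i) (votes R i) (commits R i) (st i.+1).
Proof. by case: validR => _ + _; apply. Qed.

Lemma vote_ruleP i : i < size (inputs R) -> votes R i -> vote_rule T (st i) (inp i).
Proof. by move=> /step_valid[vote_iff _ _ _ _] /vote_iff. Qed.

Lemma run_mono (g : rstate f Node -> nat) :
    (forall i, i < size (inputs R) -> g (st i) <= g (st i.+1)) ->
  forall k m, k <= m -> m <= size (inputs R) -> g (st k) <= g (st m).
Proof.
move=> g_step k m le_km le_m.
apply: (@homo_leq_in _ [pred k | k <= size (inputs R)] (fun k => g (st k)) leq) => //.
- exact: leq_trans.
- by move=> i j _ le_j l /andP[_ lt_lj]; apply: ltnW (leq_trans lt_lj le_j).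
- by move=> i _; apply: g_step.
- exact: leq_trans le_m.
Qed.

Lemma vheight_mono : forall k m, k <= m -> m <= size (inputs R) ->
  vheight (st k) <= vheight (st m).
Proof.
apply: run_mono => i /step_valid[vote_iff -> _ _ _].
by case: ifP => // /vote_iff[/ltnW].
Qed.

Lemma lock_height_mono : forall k m, k <= m -> m <= size (inputs R) ->
  h (lock k) <= h (lock m).
Proof.
apply: (@run_mono (fun s => h (block s))) => i /step_valid[_ _ _ -> _].
by case: ifP => // /ltnW.
Qed.

Lemma lock_height_updated i : i < size (inputs R) ->
  h (qc (qc (inp i))) <= h (lock i.+1).
Proof. by move=> /step_valid[_ _ _ -> _]; case: ifP => // /negbT; rewrite -leqNgt. Qed.

Lemma lock_certified k : k <= size (inputs R) -> certified (lock k).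
Proof.
elim: k => [|k IH] lt_k; first by case: validR => -> _ _; left.
case: (step_valid lt_k) => _ _ _ -> _.
by case: ifP => _; [apply: certified_justify | apply/IH/ltnW].
Qed.

Lemma lock_height_le_vheight k : k <= size (inputs R) -> h (lock k) <= vheight (st k).
Proof.
elim: k => [|k IH] lt_k; first by case: validR => -> _ _.
have {IH}lock_le := IH (ltnW lt_k).
have le1 := height_justify_le (qc (inp k)); have le2 := height_justify_le (inp k).
case: (step_valid lt_k) => vote_iff -> _ -> _.
case: (boolP (votes R k)) => [vk | nvk].
  by have [vh_lt _] := vote_iff.1 vk; case: ifP => _; lia.
case: ifP => // lock_lt; rewrite leqNgt; apply/negP => vh_lt.
by apply: (negP nvk); apply: vote_iff.2; split; [|right]; lia.
Qed.

Lemma vote_height_lt i j : i < j -> j < size (inputs R) -> votes R i -> votes R j ->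
  h (inp i) < h (inp j).
Proof.
move=> lt_ij lt_j vi vj.
have [vh_lt _] := vote_ruleP lt_j vj.
case: (step_valid (ltn_trans lt_ij lt_j)) => _ vh_i _ _ _; rewrite vi in vh_i.
by rewrite -vh_i; apply: leq_ltn_trans vh_lt; apply: vheight_mono => //; apply: ltnW.
Qed.

Lemma vote_index_lt i j n1 n2 : votes_for R i n1 -> votes_for R j n2 ->
  h n1 < h n2 -> i < j.
Proof.
case=> lt_i vi <- [lt_j vj <-] lt_h.
case: ltngtP => // [lt_ji | eq_ij]; last by rewrite eq_ij ltnn in lt_h.
by have := vote_height_lt lt_ji lt_i vj vi; rewrite ltnNge (ltnW lt_h).
Qed.

Lemma vote_height_inj i j n1 n2 : votes_for R i n1 -> votes_for R j n2 ->
  h n1 = h n2 -> n1 = n2.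
Proof.
case=> lt_i vi <- [lt_j vj <-] eq_h.
case: (ltngtP i j) => [lt_ij | lt_ji | -> //].
- by have := vote_height_lt lt_ij lt_j vi vj; rewrite eq_h ltnn.
- by have := vote_height_lt lt_ji lt_i vj vi; rewrite eq_h ltnn.
Qed.

(* From step [j] on the replica is locked at least as high as [qc (qc (inp j))]; by the
   voting rule a later vote either extends the (certified) lock or is justified by a QC
   above it. *)
Lemma later_vote_extends_certified j i : j < i -> i < size (inputs R) -> votes R i ->
  exists2 m, certified m &
    [/\ h (qc (qc (inp j))) <= h m, h m < h (inp i) & extends T (inp i) m].
Proof.
move=> lt_ji lt_i vi.
have lock_ge : h (qc (qc (inp j))) <= h (lock i).
  apply: leq_trans (lock_height_updated (ltn_trans lt_ji lt_i)) _.
  exact: lock_height_mono lt_ji (ltnW lt_i).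
have [vh_lt [ext_lock | lock_lt]] := vote_ruleP lt_i vi.
  exists (lock i); first exact/lock_certified/ltnW.
  by split=> //; apply: leq_ltn_trans (lock_height_le_vheight (ltnW lt_i)) vh_lt.
have inpG : inp i <> G.
  move=> eqG; move: lock_lt; rewrite eqG; case: wfT => _ _ _ -> _.
  by rewrite ltnNge height_genesis_le.
exists (qc (inp i)); first exact: certified_justify.
by split; [lia | apply: height_justify_lt | apply: extends_justify].
Qed.

Lemma committed_chain x : committed_by T R x ->
  exists b2, [/\ certified b2, direct_chain b2 & extends T (qc (qc b2)) x].
Proof.
case=> i [b [lt_i com_i bx]]; case: (step_valid lt_i) => _ _ _ _.
case: ifP => [/andP[/eqP p2 /eqP p1] [com_b _] | _ [com_b _]]; rewrite com_i in com_b => //.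
case: com_b bx => -> bx.
by exists (qc (inp i)); split; [apply: certified_justify | split |].
Qed.
End Run.

Section Execution.
Variables (Hs : {set replica f}) (ctime : Node -> nat) (E : replica f -> run f Node).
Hypothesis validE : valid_execution T Hs ctime E.

Lemma honest_run r : r \in Hs -> valid_run T (E r).
Proof. by case: validE => _ + _ _; apply. Qed.

Lemma certified_quorum n : certified n -> n <> G ->
  exists2 S : {set replica f}, 2 * f + 1 <= #|S| &
    forall r, r \in Hs -> r \in S -> exists i, votes_for (E r) i n.
Proof.
case=> [-> // | [x xG <-]] nG.
case: validE => _ _ _ /(_ x xG) [// | [quorum_x honest_x]].
exists (qc_sigs (justify T x)) => // r rH rS.
by have [i [? ? ? _]] := honest_x r rH rS; exists i.
Qed.

Lemma common_honest_voter n1 n2 : certified n1 -> certified n2 -> n1 <> G -> n2 <> G ->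
  exists2 r, r \in Hs & exists i j, votes_for (E r) i n1 /\ votes_for (E r) j n2.
Proof.
move=> c1 c2 n1G n2G.
have [S1 q1 v1] := certified_quorum c1 n1G; have [S2 q2 v2] := certified_quorum c2 n2G.
have [byz_le _ _ _] := validE.
have [r [rH r1 r2]] := honest_in_quorums byz_le q1 q2.
have [i vi] := v1 r rH r1; have [j vj] := v2 r rH r2.
by exists r => //; exists i, j.
Qed.

Lemma certified_height_inj n1 n2 : certified n1 -> certified n2 -> h n1 = h n2 -> n1 = n2.
Proof.
move=> c1 c2 eq_h.
have [eq1|/eqP n1G] := eqVneq n1 G; have [eq2|/eqP n2G] := eqVneq n2 G.
- by rewrite eq1 eq2.
- by move: (height_genesis_lt n2G); rewrite -eq_h eq1 ltnn.
- by move: (height_genesis_lt n1G); rewrite eq_h eq2 ltnn.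
have [r rH [i [j [vi vj]]]] := common_honest_voter c1 c2 n1G n2G.
exact: (vote_height_inj (honest_run rH) vi vj eq_h).
Qed.

(* An honest replica in both quorums voted for [b] first, so it was already locked
   at height [h (qc (qc b))] when it voted for [n]. *)
Lemma certified_above_extends_certified b n : certified b -> b <> G -> certified n ->
  h b < h n ->
  exists2 m, certified m & [/\ h (qc (qc b)) <= h m, h m < h n & extends T n m].
Proof.
move=> cb bG cn lt_bn.
have nG : n <> G by move=> eqG; move: lt_bn; rewrite eqG ltnNge height_genesis_le.
have [r rH [i [j [vi vj]]]] := common_honest_voter cn cb nG bG.
have validR := honest_run rH.
have lt_ji := vote_index_lt validR vj vi lt_bn.
have [lt_i vote_i <-] := vi; have [_ _ <-] := vj.
exact: (later_vote_extends_certified validR lt_ji lt_i vote_i).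
Qed.

Lemma direct_chain_locks b2 n : certified b2 -> direct_chain b2 -> certified n ->
  h (qc (qc b2)) <= h n -> extends T n (qc (qc b2)).
Proof.
move=> cb2 [p2 p1]; have [k] := ubnP (h n); elim: k n => // k IH n /ltnSE hn cn le_n.
have [lt_n | le_n2] := ltnP (h b2) (h n).
  have [m cm [le_m lt_m nm]] :=
    certified_above_extends_certified cb2 (parent_neq_genesis p2) cn lt_n.
  exact: extends_trans nm (IH m (leq_trans lt_m hn) cm le_m).
have h2 := height_parent p2; have h1 := height_parent p1.
have : h n = h (qc (qc b2)) \/ h n = h (qc b2) \/ h n = h b2 by lia.
case=> [eq_c | [eq_b1 | eq_b2]].
- by rewrite (certified_height_inj cn (certified_justify _) eq_c); apply: extends_refl.
- rewrite (certified_height_inj cn (certified_justify _) eq_b1).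
  exact: extends_step p1 (extends_refl _ _).
- rewrite (certified_height_inj cn cb2 eq_b2).
  exact: extends_step p2 (extends_step p1 (extends_refl _ _)).
Qed.

Lemma committed_comparable r1 r2 x y : r1 \in Hs -> r2 \in Hs ->
  committed_by T (E r1) x -> committed_by T (E r2) y -> extends T x y \/ extends T y x.
Proof.
move=> r1H r2H /(committed_chain (honest_run r1H)) [b2 [cb2 chb bx]].
move=> /(committed_chain (honest_run r2H)) [d2 [cd2 chd dy]].
wlog le_bd : b2 d2 x y cb2 chb bx cd2 chd dy / h (qc (qc b2)) <= h (qc (qc d2)).
  move=> wlog_le; have [le | /ltnW le] := leqP (h (qc (qc b2))) (h (qc (qc d2))).
    exact: wlog_le le.
  by have [] := wlog_le d2 b2 y x cd2 chd dy cb2 chb bx le; [right | left].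
have db := direct_chain_locks cb2 chb (certified_justify _) le_bd.
exact: extends_comparable (extends_trans db bx) dy.
Qed.

End Execution.

End Tree.

Theorem mainTheorem3 (f : nat) (Node : eqType) (T : tree f Node)
    (Hs : {set replica f}) (ctime : Node -> nat) (E : replica f -> run f Node) :
  wf_tree T ->
  valid_execution T Hs ctime E ->
  forall b w : Node, conflicting T b w ->
  forall r1 r2 : replica f, r1 \in Hs -> r2 \in Hs ->
  ~ (committed_by T (E r1) b /\ committed_by T (E r2) w).
Proof.
move=> wfT validE b w [not_bw not_wb] r1 r2 r1H r2H [com_b com_w].
by case: (committed_comparable wfT validE r1H r2H com_b com_w).
Qed.
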